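(* Let $r>0$ and let $z\colon[0,r)\to[0,r)$ be a homeomorphism with $(\alpha)z>\alpha$ for all $\alpha\in(0,r)$. Let $f$ be a permutation of $[0,r)$ such that $f$ commutes with $z$, $f$ is (right-)continuous at $0$, and $f$ has finitely many points of discontinuity. Then $f$ is continuous (for the usual topology).
   Context: Maps act on the right: $(\alpha)z$ is the image of $\alpha$ under $z$, and $fz$ means ''first $f$, then $z$''. *)

From Stdlib Require Import Reals List.
Open Scope R_scope.

Definition Ico0 (r : R) (x : R) : Prop := 0 <= x /\ x < r.

Definition cont_at_in (D : R -> Prop) (f : R -> R) (x : R) : Prop :=
  forall eps : R, 0 < eps -> exists delta : R, 0 < delta /\
    forall y : R, D y -> Rabs (y - x) < delta -> Rabs (f y - f x) < eps.

Definition cont_on (D : R -> Prop) (f : R -> R) : Prop :=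
  forall x : R, D x -> cont_at_in D f x.

Definition maps_into (D : R -> Prop) (f : R -> R) : Prop :=
  forall x : R, D x -> D (f x).

Definition perm_on (D : R -> Prop) (f : R -> R) : Prop :=
  maps_into D f /\
  (forall x y : R, D x -> D y -> f x = f y -> x = y) /\
  (forall y : R, D y -> exists x : R, D x /\ f x = y).

Definition homeo_on (D : R -> Prop) (f : R -> R) : Prop :=
  exists g : R -> R,
    maps_into D f /\ maps_into D g /\
    (forall x : R, D x -> g (f x) = x) /\
    (forall y : R, D y -> f (g y) = y) /\
    cont_on D f /\ cont_on D g.

Definition finitely_many_discont (D : R -> Prop) (f : R -> R) : Prop :=
  exists l : list R, forall x : R, D x -> ~ cont_at_in D f x -> In x l.

From Stdlib Require Import Reals List Lra Lia Classical FinFun.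
Open Scope R_scope.

(* Since f commutes with the homeomorphism z of D = [0, r), with
   inverse g, we have f = g o f o z on D; so if f is continuous at (x)z then it
   is continuous at x.  Contrapositively, a discontinuity of f at x propagates
   to every point of the forward orbit x, (x)z, (x)z^2, ...  For x > 0 this
   orbit is strictly increasing (because (a)z > a on (0, r)), hence consists of
   infinitely many distinct points, which is impossible since f has only
   finitely many discontinuities.  The point x = 0 is handled by the
   hypothesis that f is continuous there. *)

Lemma cont_at_in_comp (D : R -> Prop) (h k : R -> R) (x : R) :
  maps_into D h -> cont_at_in D h x -> cont_at_in D k (h x) ->
  cont_at_in D (fun a => k (h a)) x.
Proof.
  intros Mh Ch Ck eps Heps.
  destruct (Ck eps Heps) as [d1 [Hd1 H1]].
  destruct (Ch d1 Hd1) as [d2 [Hd2 H2]].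
  exists d2; split; [exact Hd2|].
  intros y Dy Hy. apply H1; [apply Mh; exact Dy | apply H2; assumption].
Qed.

Lemma cont_at_in_ext (D : R -> Prop) (h k : R -> R) (x : R) :
  D x -> (forall a, D a -> h a = k a) -> cont_at_in D h x -> cont_at_in D k x.
Proof.
  intros Dx E C eps Heps. destruct (C eps Heps) as [d [Hd H]].
  exists d; split; [exact Hd|].
  intros y Dy Hy. rewrite <- !E by assumption. auto.
Qed.

(* If f commutes with z on D, z is continuous and g is a continuous left
   inverse of z, then continuity of f at (x)z implies continuity at x:
   indeed f = g o f o z on D. *)
Lemma cont_back_along_conjugacy (D : R -> Prop) (z g f : R -> R) (x : R) :
  D x -> maps_into D z -> maps_into D f ->
  (forall a, D a -> g (z a) = a) -> (forall a, D a -> f (z a) = z (f a)) ->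
  cont_on D z -> cont_on D g ->
  cont_at_in D f (z x) -> cont_at_in D f x.
Proof.
  intros Dx Mz Mf gz comm Cz Cg Cf.
  apply cont_at_in_ext with (h := fun a => g (f (z a))); [exact Dx| |].
  - intros a Da. rewrite comm, gz by auto. reflexivity.
  - apply cont_at_in_comp with (h := fun a => f (z a)).
    + intros a Da. apply Mf, Mz, Da.
    + apply cont_at_in_comp; [exact Mz | apply Cz, Dx | exact Cf].
    + apply Cg, Mf, Mz, Dx.
Qed.

Section ExpandingOrbit.

Variables (r : R) (z : R -> R).
Hypothesis z_maps : maps_into (Ico0 r) z.
Hypothesis z_expands : forall a : R, 0 < a < r -> z a > a.

Lemma orbit_in_interval (x : R) (n : nat) :
  0 < x < r -> 0 < Nat.iter n z x < r.
Proof.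
  intros Hx. induction n as [|n IH]; simpl; [exact Hx|].
  destruct (z_maps (Nat.iter n z x)) as [_ Hr]; [unfold Ico0; lra|].
  specialize (z_expands _ IH). lra.
Qed.

Lemma orbit_increasing (x : R) (m n : nat) :
  0 < x < r -> (m < n)%nat -> Nat.iter m z x < Nat.iter n z x.
Proof.
  intros Hx Hmn. induction Hmn as [|n Hmn IH]; simpl.
  - apply z_expands, orbit_in_interval, Hx.
  - specialize (z_expands _ (orbit_in_interval x n Hx)). lra.
Qed.

Lemma orbit_injective (x : R) :
  0 < x < r -> Injective (fun n => Nat.iter n z x).
Proof.
  intros Hx m n E.
  destruct (Nat.lt_total m n) as [H|[H|H]]; [| exact H |].
  - pose proof (orbit_increasing x m n Hx H). simpl in E. lra.
  - pose proof (orbit_increasing x n m Hx H). simpl in E. lra.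
Qed.

End ExpandingOrbit.

Lemma injective_seq_not_in_list (u : nat -> R) (l : list R) :
  Injective u -> ~ (forall n, In (u n) l).
Proof.
  intros Hinj Hin.
  set (L := map u (seq 0 (S (length l)))).
  assert (HND : NoDup L) by (apply Injective_map_NoDup; [exact Hinj | apply seq_NoDup]).
  assert (Hincl : incl L l).
  { intros y Hy. apply in_map_iff in Hy. destruct Hy as [n [<- _]]. apply Hin. }
  pose proof (NoDup_incl_length HND Hincl) as HL.
  unfold L in HL. rewrite length_map, length_seq in HL. lia.
Qed.

Theorem lemma3p1 (r : R) (z f : R -> R)
  (hr : 0 < r)
  (hz : homeo_on (Ico0 r) z)
  (hzgt : forall a : R, 0 < a < r -> z a > a)
  (hf : perm_on (Ico0 r) f)
  (hcomm : forall a : R, Ico0 r a -> f (z a) = z (f a))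
  (hf0 : cont_at_in (Ico0 r) f 0)
  (hfin : finitely_many_discont (Ico0 r) f) :
  cont_on (Ico0 r) f.
Proof.
  destruct hz as [g [Mz [_ [gz [_ [Cz Cg]]]]]].
  destruct hf as [Mf _].
  destruct hfin as [l Hl].
  intros x Dx. apply NNPP; intro NC.
  destruct (Req_dec x 0) as [-> | xn0]; [contradiction|].
  assert (Hx : 0 < x < r) by (destruct Dx; lra).
  assert (orbit_discont : forall n, ~ cont_at_in (Ico0 r) f (Nat.iter n z x)).
  { induction n as [|n IH]; [exact NC|]. intro C. apply IH.
    apply (cont_back_along_conjugacy (Ico0 r) z g f); auto.
    pose proof (orbit_in_interval r z Mz hzgt x n Hx). unfold Ico0; lra. }
  apply (injective_seq_not_in_list _ l (orbit_injective r z Mz hzgt x Hx)).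
  intro n. apply Hl; [| apply orbit_discont].
  pose proof (orbit_in_interval r z Mz hzgt x n Hx). unfold Ico0; lra.
Qed.
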